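(* Let $n\ge5$ and consider generic twisted $n$-gons modulo projective equivalence with corner invariants $(x_1,y_1,\dots,x_n,y_n)$. The functions $O_n=\prod_{i=1}^n x_i$ and $E_n=\prod_{i=1}^n y_i$ are invariant under the pentagram map. When $n$ is even, the functions $O_{n/2}=\prod_{i\text{ even}}x_i+\prod_{i\text{ odd}}x_i$ and $E_{n/2}=\prod_{i\text{ even}}y_i+\prod_{i\text{ odd}}y_i$ (products over $1\le i\le n$) are also invariant under the pentagram map.
   Context: A twisted $n$-gon is a map $\phi:\mathbb{Z}\to\mathbb{RP}^2$ with $\phi(k+n)=M\circ\phi(k)$ for all $k$, for a fixed $M\in\mathrm{PGL}(3,\mathbb{R})$, such that $v_{i-1},v_i,v_{i+1}$ are in general position for all $i$, where $v_i=\phi(i)$. The cross ratio of four collinear points is $[t_1,t_2,t_3,t_4]=\frac{(t_1-t_2)(t_3-t_4)}{(t_1-t_3)(t_2-t_4)}$ in an affine parameter $t$ on the line. Writing $(p,q)$ for the line through $p,q$, the corner invariants are $x_i=[v_{i-2},v_{i-1},(v_{i-2},v_{i-1})\cap(v_i,v_{i+1}),(v_{i-2},v_{i-1})\cap(v_{i+1},v_{i+2})]$ and $y_i=[(v_{i-2},v_{i-1})\cap(v_{i+1},v_{i+2}),(v_{i-1},v_i)\cap(v_{i+1},v_{i+2}),v_{i+1},v_{i+2}]$; they are $n$-periodic and projectively invariant, giving coordinates on the space of generic twisted $n$-gons modulo projective equivalence. The pentagram map $T$ sends $\phi$ to the twisted $n$-gon whose vertices are the intersection points $(v_i,v_{i+2})\cap(v_{i+1},v_{i+3})$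 of consecutive shortest diagonals, with a fixed labelling convention (index shift). *)

(* Points of RP^2 are represented by nonzero lifts in R^3
   (triples); all notions below are homogeneous of degree 0 in each lift,
   so they only depend on the projective points. *)
From HB Require Import structures.
From mathcomp Require Import all_boot all_order all_algebra.
Set Implicit Arguments. Unset Strict Implicit. Unset Printing Implicit Defensive.
Import Order.TTheory GRing.Theory Num.Theory.
Local Open Scope ring_scope.

Section Pentagram.
Variable R : realFieldType.

Definition vec := (R * R * R)%type.

Definition cross (u v : vec) : vec :=
  let: (u1, u2, u3) := u in let: (v1, v2, v3) := v in
  (u2 * v3 - u3 * v2, u3 * v1 - u1 * v3, u1 * v2 - u2 * v1).

Definition dot (u v : vec) : R :=
  let: (u1, u2, u3) := u in let: (v1, v2, v3) := v in
  u1 * v1 + u2 * v2 + u3 * v3.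

Definition scale (c : R) (u : vec) : vec :=
  let: (u1, u2, u3) := u in (c * u1, c * u2, c * u3).

Definition det3 (u v w : vec) : R := dot (cross u v) w.

Definition mxapp (m1 m2 m3 : vec) (v : vec) : vec := (dot m1 v, dot m2 v, dot m3 v).

(* (a,b) cap (c,d): intersection of the line through a,b and the line
   through c,d *)
Definition meet (a b c d : vec) : vec := cross (cross a b) (cross c d).

(* For points p, q on a line whose (nonzero) normal vector is u,
   p x q = D u p q * (u/|u|^2)-direction; in an affine parameter t on the
   line (lift p = A + t B) one has D u p q = c * (t_q - t_p) with c <> 0. *)
Definition Dl (u p q : vec) : R := dot (cross p q) u.

(* cross ratio [p1,p2,p3,p4] = (t1-t2)(t3-t4)/((t1-t3)(t2-t4)) of four
   points on the line with normal u, written homogeneously *)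
Definition crossratio (u p1 p2 p3 p4 : vec) : R :=
  Dl u p1 p2 * Dl u p3 p4 / (Dl u p1 p3 * Dl u p2 p4).

Definition cr_defined (u p1 p2 p3 p4 : vec) : bool :=
  (Dl u p1 p3 != 0) && (Dl u p2 p4 != 0).

Definition x_args (V : int -> vec) (i : int) :=
  let A := V (i - 2) in let B := V (i - 1) in
  (cross A B, A, B, meet A B (V i) (V (i + 1)), meet A B (V (i + 1)) (V (i + 2))).

Definition y_args (V : int -> vec) (i : int) :=
  let C := V (i + 1) in let E := V (i + 2) in
  (cross C E, meet (V (i - 2)) (V (i - 1)) C E, meet (V (i - 1)) (V i) C E, C, E).

Definition xinv (V : int -> vec) (i : int) : R :=
  let: (u, p1, p2, p3, p4) := x_args V i in crossratio u p1 p2 p3 p4.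
Definition yinv (V : int -> vec) (i : int) : R :=
  let: (u, p1, p2, p3, p4) := y_args V i in crossratio u p1 p2 p3 p4.

Definition corner_defined (V : int -> vec) (i : int) : bool :=
  (let: (u, p1, p2, p3, p4) := x_args V i in cr_defined u p1 p2 p3 p4) &&
  (let: (u, p1, p2, p3, p4) := y_args V i in cr_defined u p1 p2 p3 p4).

Definition twisted_ngon (n : nat) (V : int -> vec) : Prop :=
  (exists m1 m2 m3 : vec, det3 m1 m2 m3 != 0 /\
     forall k : int, exists2 c : R, c != 0 &
       V (k + n%:Z) = scale c (mxapp m1 m2 m3 (V k))) /\
  (forall i : int, det3 (V (i - 1)) (V i) (V (i + 1)) != 0).

Definition generic_ngon (n : nat) (V : int -> vec) : Prop :=
  twisted_ngon n V /\ forall i : int, corner_defined V i.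

Definition pentagram (V : int -> vec) : int -> vec :=
  fun i => meet (V i) (V (i + 2)) (V (i + 1)) (V (i + 3)).

Definition O_n (n : nat) (V : int -> vec) : R :=
  \prod_(1 <= i < n.+1) xinv V i%:Z.
Definition E_n (n : nat) (V : int -> vec) : R :=
  \prod_(1 <= i < n.+1) yinv V i%:Z.
Definition O_half (n : nat) (V : int -> vec) : R :=
  \prod_(1 <= i < n.+1 | ~~ odd i) xinv V i%:Z +
  \prod_(1 <= i < n.+1 | odd i) xinv V i%:Z.
Definition E_half (n : nat) (V : int -> vec) : R :=
  \prod_(1 <= i < n.+1 | ~~ odd i) yinv V i%:Z +
  \prod_(1 <= i < n.+1 | odd i) yinv V i%:Z.

End Pentagram.

(* Lifting the vertices to R^3, every corner invariant is a ratio of the 3x3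
   determinants [j,j+1,j+2], [j,j+1,j+3], [j,j+2,j+3] of lifts, and the
   corresponding determinants of the lifted image under T factor into these and
   [j,j+2,j+4]. Hence x_i(TV) = x_(i-1) m_(i-2) / m_i and y_i(TV) = y_i l_(i-2) / l_i,
   where m and l are ratios of determinants of degree zero in every lift. The
   monodromy multiplies each lift by a nonzero scalar and each determinant by
   det M, so m, l and x are n-periodic, and the products over a period (or over
   the even and odd indices when n is even) telescope. *)

From HB Require Import structures.
From mathcomp Require Import all_boot all_order all_algebra.
From mathcomp Require Import ring zify.
From Stdlib Require Import FunctionalExtensionality.
Import Order.TTheory GRing.Theory Num.Theory.
Local Open Scope ring_scope.

Set Implicit Arguments.
Unset Strict Implicit.

Section Products.
Variable F : fieldType.
Implicit Types (f a g h : int -> F) (n k : nat).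

Lemma prod_shift1_periodic f n : (forall i, f (i + n%:Z) = f i) ->
  \prod_(1 <= i < n.+1) f (i%:Z - 1) = \prod_(1 <= i < n.+1) f i%:Z.
Proof.
case: n => [|n] fP; first by rewrite !big_geq.
rewrite [LHS]big_nat_recl // [RHS]big_nat_recr //= mulrC -[n.+1%:Z]add0r fP.
by congr (_ * _); apply: eq_bigr => i _; congr f; lia.
Qed.

Lemma prod_shift_periodic f n p : (forall i, f (i + n%:Z) = f i) ->
  \prod_(1 <= i < n.+1) f (i%:Z - p%:Z) = \prod_(1 <= i < n.+1) f i%:Z.
Proof.
elim: p f => [|p IHp] f fP; first by apply: eq_bigr => i _; rewrite subr0.
rewrite -(IHp f) // -(prod_shift1_periodic (f := fun i => f (i - p%:Z))); last first.
  by move=> i; rewrite addrAC fP.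
by apply: eq_bigr => i _; congr f; lia.
Qed.

Lemma prod_telescope_periodic f a g n p :
    (forall i, g (i + n%:Z) = g i) -> (forall i, g i != 0) ->
    (forall i, f i = a i * (g (i - p%:Z) / g i)) ->
  \prod_(1 <= i < n.+1) f i%:Z = \prod_(1 <= i < n.+1) a i%:Z.
Proof.
move=> gP g_neq0 fE; under eq_bigr => i _ do rewrite fE.
rewrite big_split /= prodf_div prod_shift_periodic // divff ?mulr1 //.
by rewrite prodf_seq_neq0; apply/allP => i _; rewrite g_neq0.
Qed.

Lemma prod_even_index f k :
  \prod_(1 <= i < (2 * k).+1 | ~~ odd i) f i%:Z = \prod_(1 <= j < k.+1) f (2 * j%:Z).
Proof.
elim: k => [|k IH]; first by rewrite !big_geq.
rewrite (_ : (2 * k.+1).+1 = (2 * k).+3)%N; last by lia.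
rewrite big_mkcond big_nat_recr // big_nat_recr // -big_mkcond IH [in RHS]big_nat_recr //=.
by rewrite oddM /= mulr1; congr (_ * f _); lia.
Qed.

Lemma prod_odd_index f k :
  \prod_(1 <= i < (2 * k).+1 | odd i) f i%:Z = \prod_(1 <= j < k.+1) f (2 * j%:Z - 1).
Proof.
elim: k => [|k IH]; first by rewrite !big_geq.
rewrite (_ : (2 * k.+1).+1 = (2 * k).+3)%N; last by lia.
rewrite big_mkcond big_nat_recr // big_nat_recr // -big_mkcond IH [in RHS]big_nat_recr //=.
by rewrite oddM /= mulr1; congr (_ * f _); lia.
Qed.

Lemma prod_parity_telescope_periodic f a g k :
    (forall i, g (i + (2 * k)%N%:Z) = g i) -> (forall i, g i != 0) ->
    (forall i, f i = a i * (g (i - 2) / g i)) ->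
  \prod_(1 <= i < (2 * k).+1 | ~~ odd i) f i%:Z = \prod_(1 <= i < (2 * k).+1 | ~~ odd i) a i%:Z /\
  \prod_(1 <= i < (2 * k).+1 | odd i) f i%:Z = \prod_(1 <= i < (2 * k).+1 | odd i) a i%:Z.
Proof.
move=> gP g_neq0 fE; rewrite !prod_even_index !prod_odd_index.
have g2P r i : g (2 * (i + k%:Z) - r) = g (2 * i - r).
  by rewrite -(gP (2 * i - r)); congr g; lia.
split.
- apply: (prod_telescope_periodic (f := fun j => f (2 * j)) (a := fun j => a (2 * j))
          (g := fun j => g (2 * j)) (p := 1)) => [i|i|i].
  + by have := g2P 0 i; rewrite !subr0.
  + exact: g_neq0.
  + by rewrite fE; congr (_ * (g _ / _)); lia.
- apply: (prod_telescope_periodic (f := fun j => f (2 * j - 1)) (a := fun j => a (2 * j - 1))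
          (g := fun j => g (2 * j - 1)) (p := 1)) => [i|i|i].
  + exact: g2P.
  + exact: g_neq0.
  + by rewrite fE; congr (_ * (g _ / _)); lia.
Qed.

End Products.

Section Lifts.
Context {R : realFieldType}.
Implicit Types (p q r s t v : vec R) (V W : int -> vec R) (c : int -> R).

Ltac vring := repeat match goal with v : vec R |- _ => destruct v as [[? ?] ?] end;
  rewrite /Dl /meet /det3 /cross /dot /scale /mxapp /=; ring.

Lemma det3_scale_mxapp m1 m2 m3 x y z (a b d : R) :
  det3 (scale a (mxapp m1 m2 m3 x)) (scale b (mxapp m1 m2 m3 y)) (scale d (mxapp m1 m2 m3 z))
  = a * b * d * det3 m1 m2 m3 * det3 x y z.
Proof. vring. Qed.

Lemma crossratio_x_meets p q r s t :
  cr_defined (cross p q) p q (meet p q r s) (meet p q s t) ->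
  [/\ crossratio (cross p q) p q (meet p q r s) (meet p q s t)
        = det3 r s t * det3 p q s / (det3 p r s * det3 q s t),
      det3 p r s != 0 & det3 q s t != 0].
Proof.
have Dp : Dl (cross p q) p (meet p q r s) = det3 p r s * dot (cross p q) (cross p q) by vring.
have Dq : Dl (cross p q) q (meet p q s t) = det3 q s t * dot (cross p q) (cross p q) by vring.
have Dm : Dl (cross p q) (meet p q r s) (meet p q s t)
    = det3 r s t * det3 p q s * dot (cross p q) (cross p q) by vring.
rewrite /cr_defined /crossratio Dp Dq Dm [Dl _ p q]/Dl.
case/andP; rewrite !mulf_eq0 !negb_or => /andP[hp hN] /andP[hq _].
by split=> //; field; rewrite hp hq hN.
Qed.

Lemma crossratio_y_meets p q r s t :
  cr_defined (cross s t) (meet p q s t) (meet q r s t) s t ->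
  [/\ crossratio (cross s t) (meet p q s t) (meet q r s t) s t
        = det3 p q r * det3 q s t / (det3 p q s * det3 q r t),
      det3 p q s != 0 & det3 q r t != 0].
Proof.
have Dp : Dl (cross s t) (meet p q s t) s = det3 p q s * dot (cross s t) (cross s t) by vring.
have Dq : Dl (cross s t) (meet q r s t) t = det3 q r t * dot (cross s t) (cross s t) by vring.
have Dm : Dl (cross s t) (meet p q s t) (meet q r s t)
    = det3 p q r * det3 q s t * dot (cross s t) (cross s t) by vring.
rewrite /cr_defined /crossratio Dp Dq Dm [Dl _ s t]/Dl.
case/andP; rewrite !mulf_eq0 !negb_or => /andP[hp hN] /andP[hq _].
by split=> //; field; rewrite hp hq hN.
Qed.

Lemma det3_meets012 v0 v1 v2 v3 v4 v5 :
  det3 (meet v0 v2 v1 v3) (meet v1 v3 v2 v4) (meet v2 v4 v3 v5)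
  = det3 v0 v2 v4 * det3 v1 v3 v5 * det3 v1 v2 v3 * det3 v2 v3 v4.
Proof. vring. Qed.

Lemma det3_meets013 v0 v1 v2 v3 v4 v5 v6 :
  det3 (meet v0 v2 v1 v3) (meet v1 v3 v2 v4) (meet v3 v5 v4 v6)
  = det3 v0 v2 v4 * det3 v1 v2 v3 * det3 v1 v3 v5 * det3 v3 v4 v6.
Proof. vring. Qed.

Lemma det3_meets023 v0 v1 v2 v3 v4 v5 v6 :
  det3 (meet v0 v2 v1 v3) (meet v2 v4 v3 v5) (meet v3 v5 v4 v6)
  = det3 v2 v4 v6 * det3 v3 v4 v5 * det3 v0 v2 v3 * det3 v1 v3 v5.
Proof. vring. Qed.

Definition det012 V j := det3 (V j) (V (j + 1)) (V (j + 2)).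
Definition det013 V j := det3 (V j) (V (j + 1)) (V (j + 3)).
Definition det023 V j := det3 (V j) (V (j + 2)) (V (j + 3)).
Definition det024 V j := det3 (V j) (V (j + 2)) (V (j + 4)).

Definition nondegenerate V :=
  [/\ forall j, det012 V j != 0, forall j, det013 V j != 0,
      forall j, det023 V j != 0 & forall j, det024 V j != 0].

Definition x_dets V i := det012 V i * det013 V (i - 2) / (det023 V (i - 2) * det023 V (i - 1)).
Definition y_dets V i := det012 V (i - 2) * det023 V (i - 1) / (det013 V (i - 2) * det013 V (i - 1)).

Definition x_factor V j :=
  det024 V j * det023 V (j - 1) / (det013 V (j - 1) * det013 V (j + 1)).
Definition y_factor V j :=
  det013 V j * det013 V (j + 1) * det013 V (j + 2) / (det024 V (j + 1) * det012 V j * det012 V (j + 2)).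

(* Local identities are proved at index 0, where all indices are closed integers,
   so that e.g. [0 - 2 + 1] and [-1] are convertible; they are transported to an
   arbitrary index by translating the polygon. *)
Definition shift (i : int) V : int -> vec R := fun k => V (i + k).

Definition shift_equivariant (F : (int -> vec R) -> int -> R) :=
  forall V i j, F (shift i V) j = F V (i + j).

Lemma det012_shift : shift_equivariant det012.
Proof. by move=> V i j; rewrite /det012 /shift !addrA. Qed.
Lemma det013_shift : shift_equivariant det013.
Proof. by move=> V i j; rewrite /det013 /shift !addrA. Qed.
Lemma det023_shift : shift_equivariant det023.
Proof. by move=> V i j; rewrite /det023 /shift !addrA. Qed.
Lemma det024_shift : shift_equivariant det024.
Proof. by move=> V i j; rewrite /det024 /shift !addrA. Qed.

Definition dets_shift := (det012_shift, det013_shift, det023_shift, det024_shift).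

Lemma x_dets_shift : shift_equivariant x_dets.
Proof. by move=> V i j; rewrite /x_dets !dets_shift !addrA. Qed.
Lemma y_dets_shift : shift_equivariant y_dets.
Proof. by move=> V i j; rewrite /y_dets !dets_shift !addrA. Qed.
Lemma x_factor_shift : shift_equivariant x_factor.
Proof. by move=> V i j; rewrite /x_factor !dets_shift !addrA. Qed.
Lemma y_factor_shift : shift_equivariant y_factor.
Proof. by move=> V i j; rewrite /y_factor !dets_shift !addrA. Qed.
Lemma xinv_shift : shift_equivariant (@xinv R).
Proof. by move=> V i j; rewrite /xinv /x_args /shift !addrA. Qed.
Lemma yinv_shift : shift_equivariant (@yinv R).
Proof. by move=> V i j; rewrite /yinv /y_args /shift !addrA. Qed.

Lemma corner_defined_shift V i j : corner_defined (shift i V) j = corner_defined V (i + j).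
Proof. by rewrite /corner_defined /x_args /y_args /shift !addrA. Qed.

Lemma shift_pentagram V i : shift i (pentagram V) = pentagram (shift i V).
Proof. by apply: functional_extensionality => k; rewrite /shift /pentagram !addrA. Qed.

Lemma nondegenerate_shift V i : nondegenerate V -> nondegenerate (shift i V).
Proof. by case=> h012 h013 h023 h024; split=> j; rewrite dets_shift. Qed.

Lemma corner_x V i : corner_defined V i ->
  [/\ xinv V i = x_dets V i, det023 V (i - 2) != 0 & det023 V (i - 1) != 0].
Proof.
have corner_x0 W : corner_defined W 0 ->
    [/\ xinv W 0 = x_dets W 0, det023 W (-2) != 0 & det023 W (-1) != 0].
  by case/andP=> /crossratio_x_meets.
by have := corner_x0 (shift i V); rewrite corner_defined_shift xinv_shift x_dets_shift !det023_shift addr0.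
Qed.

Lemma corner_y V i : corner_defined V i ->
  [/\ yinv V i = y_dets V i, det013 V (i - 2) != 0 & det013 V (i - 1) != 0].
Proof.
have corner_y0 W : corner_defined W 0 ->
    [/\ yinv W 0 = y_dets W 0, det013 W (-2) != 0 & det013 W (-1) != 0].
  by case/andP=> _ /crossratio_y_meets.
by have := corner_y0 (shift i V); rewrite corner_defined_shift yinv_shift y_dets_shift !det013_shift addr0.
Qed.

Lemma det012_pentagram V j : det012 (pentagram V) j
  = det024 V j * det024 V (j + 1) * det012 V (j + 1) * det012 V (j + 2).
Proof.
have det012_pentagram0 W : det012 (pentagram W) 0
    = det024 W 0 * det024 W 1 * det012 W 1 * det012 W 2 by exact: det3_meets012.
by have := det012_pentagram0 (shift j V); rewrite -shift_pentagram !dets_shift addr0.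
Qed.

Lemma det013_pentagram V j : det013 (pentagram V) j
  = det024 V j * det012 V (j + 1) * det024 V (j + 1) * det013 V (j + 3).
Proof.
have det013_pentagram0 W : det013 (pentagram W) 0
    = det024 W 0 * det012 W 1 * det024 W 1 * det013 W 3 by exact: det3_meets013.
by have := det013_pentagram0 (shift j V); rewrite -shift_pentagram !dets_shift addr0.
Qed.

Lemma det023_pentagram V j : det023 (pentagram V) j
  = det024 V (j + 2) * det012 V (j + 3) * det023 V j * det024 V (j + 1).
Proof.
have det023_pentagram0 W : det023 (pentagram W) 0
    = det024 W 2 * det012 W 3 * det023 W 0 * det024 W 1 by exact: det3_meets023.
by have := det023_pentagram0 (shift j V); rewrite -shift_pentagram !dets_shift addr0.
Qed.

Definition dets_pentagram := (det012_pentagram, det013_pentagram, det023_pentagram).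

Lemma xinv_pentagram V i : nondegenerate V ->
    corner_defined V (i - 1) -> corner_defined (pentagram V) i ->
  xinv (pentagram V) i = xinv V (i - 1) * (x_factor V (i - 2) / x_factor V i).
Proof.
have xinv_pentagram0 W : nondegenerate W ->
    corner_defined W (-1) -> corner_defined (pentagram W) 0 ->
    xinv (pentagram W) 0 = xinv W (-1) * (x_factor W (-2) / x_factor W 0).
  move=> [nz012 nz013 nz023 nz024] /corner_x[-> _ _] /corner_x[-> _ _].
  rewrite /x_dets /x_factor !dets_pentagram.
  by field; rewrite ?nz012 ?nz013 ?nz023 ?nz024.
move=> /(nondegenerate_shift i) /xinv_pentagram0.
by rewrite -shift_pentagram !(corner_defined_shift, xinv_shift, x_factor_shift) addr0.
Qed.

Lemma yinv_pentagram V i : nondegenerate V ->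
    corner_defined V i -> corner_defined (pentagram V) i ->
  yinv (pentagram V) i = yinv V i * (y_factor V (i - 2) / y_factor V i).
Proof.
have yinv_pentagram0 W : nondegenerate W ->
    corner_defined W 0 -> corner_defined (pentagram W) 0 ->
    yinv (pentagram W) 0 = yinv W 0 * (y_factor W (-2) / y_factor W 0).
  move=> [nz012 nz013 nz023 nz024] /corner_y[-> _ _] /corner_y[-> _ _].
  rewrite /y_dets /y_factor !dets_pentagram.
  by field; rewrite ?nz012 ?nz013 ?nz023 ?nz024.
move=> /(nondegenerate_shift i) /yinv_pentagram0.
by rewrite -shift_pentagram !(corner_defined_shift, yinv_shift, y_factor_shift) addr0.
Qed.

Definition twist_image c m1 m2 m3 V : int -> vec R :=
  fun k => scale (c k) (mxapp m1 m2 m3 (V k)).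

Lemma twist_factors V n m1 m2 m3 :
    (forall k, exists2 a : R, a != 0 & V (k + n) = scale a (mxapp m1 m2 m3 (V k))) ->
  exists2 c, (forall k, c k != 0) & shift n V = twist_image c m1 m2 m3 V.
Proof.
move=> twV; have factor k : exists a, (a != 0) && (V (k + n) == scale a (mxapp m1 m2 m3 (V k))).
  by have [a a_neq0 /eqP Va] := twV k; exists a; rewrite a_neq0 Va.
exists (fun k => xchoose (factor k)) => [k|].
  by case/andP: (xchooseP (factor k)).
apply: functional_extensionality => k; rewrite /shift addrC.
by case/andP: (xchooseP (factor k)) => _ /eqP.
Qed.

Definition twist_invariant (F : (int -> vec R) -> int -> R) :=
  forall c m1 m2 m3 W, det3 m1 m2 m3 != 0 -> (forall k, c k != 0) -> nondegenerate W ->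
  F (twist_image c m1 m2 m3 W) 0 = F W 0.

Lemma twisted_periodic F n c m1 m2 m3 V :
    shift_equivariant F -> twist_invariant F ->
    det3 m1 m2 m3 != 0 -> (forall k, c k != 0) -> nondegenerate V ->
    shift n V = twist_image c m1 m2 m3 V ->
  forall j, F V (j + n) = F V j.
Proof.
move=> shF twF hM hc ndV hV j.
have -> : F V (j + n) = F (shift j (shift n V)) 0 by rewrite !shF addr0 addrC.
have := twF (fun k => c (j + k)) m1 m2 m3 (shift j V) hM (fun k => hc (j + k)).
by rewrite hV shF addr0; apply; apply: nondegenerate_shift.
Qed.

Section TwistedDets.
Variables (c : int -> R) (m1 m2 m3 : vec R) (V : int -> vec R).

Lemma det012_twist j : det012 (twist_image c m1 m2 m3 V) j
  = c j * c (j + 1) * c (j + 2) * det3 m1 m2 m3 * det012 V j.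
Proof. exact: det3_scale_mxapp. Qed.
Lemma det013_twist j : det013 (twist_image c m1 m2 m3 V) j
  = c j * c (j + 1) * c (j + 3) * det3 m1 m2 m3 * det013 V j.
Proof. exact: det3_scale_mxapp. Qed.
Lemma det023_twist j : det023 (twist_image c m1 m2 m3 V) j
  = c j * c (j + 2) * c (j + 3) * det3 m1 m2 m3 * det023 V j.
Proof. exact: det3_scale_mxapp. Qed.
Lemma det024_twist j : det024 (twist_image c m1 m2 m3 V) j
  = c j * c (j + 2) * c (j + 4) * det3 m1 m2 m3 * det024 V j.
Proof. exact: det3_scale_mxapp. Qed.

End TwistedDets.

Definition dets_twist := (det012_twist, det013_twist, det023_twist, det024_twist).

Lemma x_dets_twist : twist_invariant x_dets.
Proof.
move=> c m1 m2 m3 W hM hc [nz012 nz013 nz023 nz024]; rewrite /x_dets !dets_twist.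
by field; rewrite hM ?hc ?nz012 ?nz013 ?nz023 ?nz024.
Qed.

Lemma x_factor_twist : twist_invariant x_factor.
Proof.
move=> c m1 m2 m3 W hM hc [nz012 nz013 nz023 nz024]; rewrite /x_factor !dets_twist.
by field; rewrite hM ?hc ?nz012 ?nz013 ?nz023 ?nz024.
Qed.

Lemma y_factor_twist : twist_invariant y_factor.
Proof.
move=> c m1 m2 m3 W hM hc [nz012 nz013 nz023 nz024]; rewrite /y_factor !dets_twist.
by field; rewrite hM ?hc ?nz012 ?nz013 ?nz023 ?nz024.
Qed.

Lemma x_factor_neq0 V j : nondegenerate V -> x_factor V j != 0.
Proof.
by case=> nz012 nz013 nz023 nz024; rewrite /x_factor !(mulf_neq0, invr_neq0).
Qed.

Lemma y_factor_neq0 V j : nondegenerate V -> y_factor V j != 0.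
Proof.
by case=> nz012 nz013 nz023 nz024; rewrite /y_factor !(mulf_neq0, invr_neq0).
Qed.

Lemma nondegenerate_generic V :
    (forall i, det3 (V (i - 1)) (V i) (V (i + 1)) != 0) ->
    (forall i, corner_defined V i) ->
    (forall i, det3 (pentagram V (i - 1)) (pentagram V i) (pentagram V (i + 1)) != 0) ->
  nondegenerate V.
Proof.
have det012_neq0 W : (forall i, det3 (W (i - 1)) (W i) (W (i + 1)) != 0) ->
    forall j, det012 W j != 0.
  by move=> hW j; have := hW (j + 1); rewrite addrK -addrA.
move=> /det012_neq0 nz012 cdV /det012_neq0 nzT; split=> // j.
- by have [_ + _] := corner_y (cdV (j + 2)); rewrite addrK.
- by have [_ + _] := corner_x (cdV (j + 2)); rewrite addrK.
- by have := nzT j; rewrite det012_pentagram !mulf_eq0 -!orbA negb_or => /andP[].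
Qed.

End Lifts.

Section Invariants.
Variables (R : realFieldType) (n : nat) (V : int -> vec R) (c : int -> R) (m1 m2 m3 : vec R).
Hypotheses (hM : det3 m1 m2 m3 != 0) (hc : forall k, c k != 0).
Hypotheses (hV : shift n V = twist_image c m1 m2 m3 V) (ndV : nondegenerate V).
Hypotheses (cdV : forall i, corner_defined V i) (cdTV : forall i, corner_defined (pentagram V) i).

Lemma x_factor_periodic (j : int) : x_factor V (j + n) = x_factor V j.
Proof. exact: twisted_periodic x_factor_shift x_factor_twist hM hc ndV hV j. Qed.

Lemma y_factor_periodic (j : int) : y_factor V (j + n) = y_factor V j.
Proof. exact: twisted_periodic y_factor_shift y_factor_twist hM hc ndV hV j. Qed.

Lemma xinv_periodic (j : int) : xinv V (j + n) = xinv V j.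
Proof.
have [-> _ _] := corner_x (cdV (j + n)); have [-> _ _] := corner_x (cdV j).
exact: twisted_periodic x_dets_shift x_dets_twist hM hc ndV hV j.
Qed.

Lemma O_n_pentagram : O_n n (pentagram V) = O_n n V.
Proof.
rewrite /O_n (prod_telescope_periodic (a := fun i => xinv V (i - 1)) (p := 2)
  x_factor_periodic (fun j => x_factor_neq0 j ndV)) => [|i]; last exact: xinv_pentagram.
exact: prod_shift_periodic 1 xinv_periodic.
Qed.

Lemma E_n_pentagram : E_n n (pentagram V) = E_n n V.
Proof.
apply: (prod_telescope_periodic (p := 2) y_factor_periodic (fun j => y_factor_neq0 j ndV)).
by move=> i; apply: yinv_pentagram.
Qed.

Section EvenPolygon.
Variable k : nat.
Hypothesis n_double : n = (2 * k)%N.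

Lemma O_half_pentagram : O_half n (pentagram V) = O_half n V.
Proof.
have xfP : forall j : int, x_factor V (j + (2 * k)%N) = x_factor V j.
  by rewrite -n_double; exact: x_factor_periodic.
rewrite /O_half n_double.
have [-> ->] := prod_parity_telescope_periodic (a := fun i => xinv V (i - 1)) xfP
  (fun j => x_factor_neq0 j ndV) (fun i => xinv_pentagram ndV (cdV _) (cdTV i)).
(* T shifts the x-indices by one, exchanging the even and odd halves. *)
rewrite addrC (prod_even_index (fun i => xinv V (i - 1))).
rewrite (prod_odd_index (fun i => xinv V (i - 1))) prod_even_index prod_odd_index.
congr (_ + _).
rewrite -(prod_shift_periodic (f := fun j => xinv V (2 * j)) 1) => [|j].
  by apply: eq_bigr => j _; congr (xinv V _); lia.
have -> : 2 * (j + k%:Z) = 2 * j + n by rewrite n_double; lia.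
exact: xinv_periodic.
Qed.

Lemma E_half_pentagram : E_half n (pentagram V) = E_half n V.
Proof.
have yfP : forall j : int, y_factor V (j + (2 * k)%N) = y_factor V j.
  by rewrite -n_double; exact: y_factor_periodic.
rewrite /E_half n_double.
by have [-> ->] := prod_parity_telescope_periodic (a := yinv V) yfP
  (fun j => y_factor_neq0 j ndV) (fun i => yinv_pentagram ndV (cdV i) (cdTV i)).
Qed.

End EvenPolygon.
End Invariants.

Unset Implicit Arguments.

Theorem corollary2 (R : realFieldType) (n : nat) (V : int -> vec R) :
  (5 <= n)%N ->
  generic_ngon n V ->
  generic_ngon n (pentagram V) ->
  O_n n (pentagram V) = O_n n V /\
  E_n n (pentagram V) = E_n n V /\
  (~~ odd n ->
     O_half n (pentagram V) = O_half n V /\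
     E_half n (pentagram V) = E_half n V).
Proof.
move=> _ [[[m1 [m2 [m3 [hM twV]]]] genV] cdV] [[_ genTV] cdTV].
have [c hc hV] := twist_factors twV.
have ndV := nondegenerate_generic genV cdV genTV.
split; first exact: (O_n_pentagram hM hc hV ndV cdV cdTV).
split; first exact: (E_n_pentagram hM hc hV ndV cdV cdTV).
move=> /negbTE n_even; have n_double : n = (2 * n./2)%N.
  by rewrite -[in LHS](odd_double_half n) n_even -mul2n.
split; first exact: (O_half_pentagram hM hc hV ndV cdV cdTV n_double).
exact: (E_half_pentagram hM hc hV ndV cdV cdTV n_double).
Qed.
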